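(* Let $n, d, p, q$ be positive integers. Let $\tilde{A} \in \mathbb{R}^{n \times n}$ be a normalized adjacency matrix of a graph on $n$ nodes, let $P \in \mathbb{R}^{n \times n}$, $X \in \mathbb{R}^{n \times p}$, $W_x \in \mathbb{R}^{p \times d}$ be arbitrary matrices, and let $W_z \in \mathbb{R}^{d \times d}$ satisfy $\|W_z\|_F^2 < 1/n$, where $\|\cdot\|_F$ is the Frobenius norm. Let $\sigma$ be either the row-wise Softmax or the element-wise Sigmoid function, and define the one-hop convolutional map $f : \mathbb{R}^{n \times d} \to \mathbb{R}^{n \times d}$ by $$f(Z) = \sigma(\tilde{A} Z W_z + P X W_x).$$ Then the implicit GNN with backbone $f$ is well-posed: the equation $Z = f(Z)$ has a unique solution $Z^* \in \mathbb{R}^{n\times d}$, and for every starting point $Z_0 \in \mathbb{R}^{n \times d}$ the iteration $Z_{k+1} = f(Z_k)$ converges to $Z^*$.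
   Context: An implicit graph neural network (IGNN) with backbone $f$ outputs node representations $Z$ defined as a solution of the equilibrium equation $Z = f(Z)$; it is called well-posed if this equation has an existing and unique solution to which forward iteration $Z_{k+1} = f(Z_k)$ converges from an arbitrary start point. The normalized adjacency matrix is $\tilde{A} = D^{-1/2}(A + I)D^{-1/2}$, where $A$ is the (symmetric, 0-1) adjacency matrix of the graph, $I$ is the identity, and $D$ is the diagonal degree matrix of $A + I$; in particular all entries of $\tilde A$ lie in $[0,1]$. The special case $P = \tilde{A}$ is a one-layer GCN backbone and $P = I$ is the IGNN* backbone. *)

From HB Require Import structures.
From mathcomp Require Import all_boot all_order all_algebra.
From mathcomp Require Import all_classical all_reals all_analysis.
Set Implicit Arguments. Unset Strict Implicit. Unset Printing Implicit Defensive.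
Import Order.TTheory GRing.Theory Num.Theory.
Import numFieldNormedType.Exports.
Local Open Scope ring_scope.
Local Open Scope classical_set_scope.

Section Defs.
Variable R : realType.

Definition is_adjacency (n : nat) (A : 'M[R]_n) : Prop :=
  (forall i j, A i j = A j i) /\
  (forall i j, A i j = 0 \/ A i j = 1) /\
  (forall i, A i i = 0).

Definition deg_AI (n : nat) (A : 'M[R]_n) (i : 'I_n) : R :=
  \sum_(j < n) (A + 1%:M) i j.

Definition norm_adj (n : nat) (A : 'M[R]_n) : 'M[R]_n :=
  let Dm := \matrix_(i < n, j < n) (if i == j then (Num.sqrt (deg_AI A i))^-1 else 0) in
  Dm *m (A + 1%:M) *m Dm.

Definition frob2 (m k : nat) (M : 'M[R]_(m, k)) : R :=
  \sum_(i < m) \sum_(j < k) M i j ^+ 2.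

Inductive activation := Softmax | Sigmoid.

Definition sigmoid (x : R) : R := (1 + expR (- x))^-1.

Definition apply_act (a : activation) (m k : nat) (M : 'M[R]_(m, k)) : 'M[R]_(m, k) :=
  match a with
  | Softmax => \matrix_(i < m, j < k) (expR (M i j) / \sum_(l < k) expR (M i l))
  | Sigmoid => \matrix_(i < m, j < k) sigmoid (M i j)
  end.

Definition well_posed (m k : nat) (f : 'M[R]_(m, k) -> 'M[R]_(m, k)) : Prop :=
  exists Zs : 'M[R]_(m, k),
    f Zs = Zs /\ (forall Z, f Z = Z -> Z = Zs) /\
    (forall Z0 : 'M[R]_(m, k), (fun t : nat => iter t f Z0) @ \oo --> Zs).

End Defs.

(* The one-hop map is Lipschitz for the Frobenius norm with constant
   ||W_z||_F < 1.  Both activations are 1-Lipschitz on each row for the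
   Euclidean norm: for softmax apply the mean value theorem to
   t |-> <u, softmax (y + t (x - y))>, whose derivative is a covariance under the
   softmax weights, and the sigmoid is a two-class softmax.  The Frobenius norm
   is submultiplicative by Cauchy-Schwarz, and D^-1/2 (A + I) D^-1/2 has
   operator norm at most 1 by the weighted Cauchy-Schwarz inequality with the
   symmetric weights A + I, whose row sums are the degrees.  The Frobenius and
   max norms being equivalent, a large iterate of the map is a contraction for
   the max norm, and Banach's fixed point theorem applies. *)

From HB Require Import structures.
From mathcomp Require Import all_boot all_order all_algebra.
From mathcomp Require Import all_classical all_reals all_analysis.
From mathcomp Require Import ring lra.
Import Order.TTheory GRing.Theory Num.Theory.
Import numFieldNormedType.Exports.
Set Implicit Arguments.
Unset Strict Implicit.
Unset Printing Implicit Defensive.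
Local Open Scope ring_scope.
Local Open Scope classical_set_scope.

(* The library gives matrices a complete uniform structure and a normed-module
   structure separately; their join is needed to apply Banach's theorem. *)
HB.instance Definition _ (R : realType) (m n : nat) := NormedModule.on 'M[R]_(m, n).

Section eventually_contractive.
Context {R : realType} {V : completeNormedModType R} (f : V -> V) (C r : R).
Hypotheses (r_ge0 : 0 <= r) (r_lt1 : r < 1).
Hypothesis iter_lipschitz :
  forall t x y, `|iter t f x - iter t f y| <= C * r ^+ t * `|x - y|.

Let geometric_cvg0 (a : R) : C * r ^+ t * a @[t --> \oo] --> 0.
Proof.
rewrite -(mul0r a) -(mulr0 C).
by apply: cvgM; [apply: cvgM; [exact: cvg_cst | apply: cvg_expr; rewrite ger0_norm] | exact: cvg_cst].
Qed.

Lemma iter_cvg_fixed_point (x : V) : f x = x -> forall z, iter t f z @[t --> \oo] --> x.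
Proof.
move=> fx z; apply/cvgrPdist_lt => e e0.
have /cvgr0Pnorm_lt/(_ e e0) := geometric_cvg0 `|x - z|.
apply: filterS => t; apply: le_lt_trans.
rewrite -{1}(iter_fix t fx); apply: le_trans (iter_lipschitz _ _ _) (ler_norm _).
Qed.

Lemma eventually_contractive_fixed_point : exists x, f x = x.
Proof.
have [m half_m] : exists m, C * r ^+ m < 2^-1.
  have /cvgr0Pnorm_lt small := geometric_cvg0 1.
  have [N _ HN] := small 2^-1 (ltac:(by rewrite invr_gt0)).
  by exists N; apply: le_lt_trans (HN N (leqnn N)); rewrite mulr1 ler_norm.
(* A fixed point of the contraction [g] is one of [f], as [f] commutes with [g]. *)
pose g := iter m f.
have g_contraction : is_contraction (totalfun_ setT g).
  exists 2^-1%:nng; split => [|[x y] _] /=; first by rewrite invf_lt1 ?ltr1n.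
  apply: le_trans (iter_lipschitz m x y) _.
  by apply: ler_wpM2r => //; apply: ltW.
have [x _ gx] := banach_fixed_point g_contraction closedT (ex_intro _ 0 I).
change (x = g x) in gx.
exists x; apply: (contraction_fixpoint_unique g_contraction (I : setT (f x)) (I : setT x)) => //=.
by change (f x = iter m f (f x)); rewrite -iterSr iterS -/(g x) -gx.
Qed.

Lemma eventually_contractive_well_posed : exists x, f x = x /\
  (forall z, f z = z -> z = x) /\ (forall z, iter t f z @[t --> \oo] --> x).
Proof.
have [x fx] := eventually_contractive_fixed_point.
exists x; split=> //; split=> [z fz|]; last exact: iter_cvg_fixed_point.
have := iter_cvg_fixed_point fx z.
rewrite (_ : (fun t => iter t f z) = cst z); last by apply/funext => t; exact: iter_fix.
by move/(cvg_lim (@norm_hausdorff _ _)); rewrite lim_cst.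
Qed.

End eventually_contractive.

Section softmax.
Variable R : realType.

Definition softmax k (x : 'I_k -> R) (j : 'I_k) : R := expR (x j) / \sum_l expR (x l).

Lemma sum_expR_gt0 k (x : 'I_k -> R) (j : 'I_k) : 0 < \sum_l expR (x l).
Proof. by rewrite (bigD1 j) //= ltr_pwDl ?expR_gt0 // sumr_ge0 // => l _; exact: expR_ge0. Qed.

Lemma is_derive_expR_affine (a b t : R) :
  is_derive t 1 (fun s : R => expR (a + s * b)) (expR (a + t * b) * b).
Proof.
apply: is_derive1_comp.
by apply: is_derive_eq; rewrite scaler0 !add0r mul1r; exact: mulr1.
Qed.

Lemma is_derive_sum_fun k (g : 'I_k -> R -> R) (dg : 'I_k -> R) (t : R) :
  (forall l, is_derive t 1 (g l) (dg l)) ->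
  is_derive t 1 (fun s => \sum_l g l s) (\sum_l dg l).
Proof. by move/is_derive_sum; rewrite fct_sumE. Qed.

Lemma is_derive_softmax_line k (y h u : 'I_k.+1 -> R) (t : R) :
  let w := softmax (fun l => y l + t * h l) in
  is_derive t 1 (fun s => \sum_l u l * softmax (fun l => y l + s * h l) l)
    (\sum_l w l * u l * h l - (\sum_l w l * u l) * (\sum_l w l * h l)).
Proof.
pose e s l := expR (y l + s * h l).
pose S s := \sum_l e s l; pose N s := \sum_l u l * e s l.
have -> : (fun s => \sum_l u l * softmax (fun l => y l + s * h l) l) = N \* (fun s => (S s)^-1).
  by apply/funext => s; rewrite /= mulr_suml; apply: eq_bigr => l _; rewrite mulrA.
have S_neq0 : S t != 0 by rewrite lt0r_neq0 // (sum_expR_gt0 _ ord0).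
have dS : is_derive t 1 S (\sum_l e t l * h l).
  by apply: is_derive_sum_fun => l; exact: is_derive_expR_affine.
have dN : is_derive t 1 N (\sum_l u l * (e t l * h l)).
  by apply: is_derive_sum_fun => l; apply: is_deriveZ; exact: is_derive_expR_affine.
apply: is_derive_eq.
have avgE (a : 'I_k.+1 -> R) : \sum_l softmax (fun l => y l + t * h l) l * a l = (\sum_l e t l * a l) / S t.
  by rewrite mulr_suml; apply: eq_bigr => l _; rewrite mulrAC.
under [X in X - _]eq_bigr do rewrite -mulrA.
rewrite (avgE u) (avgE h) (avgE (fun l => u l * h l)) /GRing.scale /=.
have -> : \sum_l u l * (e t l * h l) = \sum_l e t l * (u l * h l).
  by apply: eq_bigr => l _; ring.
have -> : N t = \sum_l e t l * u l by apply: eq_bigr => l _; rewrite mulrC.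
by field.
Qed.

Lemma softmax_ge0 k (x : 'I_k -> R) j : 0 <= softmax x j.
Proof. by rewrite divr_ge0 ?expR_ge0 // sumr_ge0 // => l _; exact: expR_ge0. Qed.

Lemma softmax_le1 k (x : 'I_k -> R) j : softmax x j <= 1.
Proof.
rewrite ler_pdivrMr ?(sum_expR_gt0 _ j) // mul1r (bigD1 j) //= lerDl.
by rewrite sumr_ge0 // => l _; exact: expR_ge0.
Qed.

Lemma sum_softmax k (x : 'I_k.+1 -> R) : \sum_j softmax x j = 1.
Proof. by rewrite -mulr_suml divff // lt0r_neq0 // (sum_expR_gt0 _ ord0). Qed.

Lemma covariance_le k (w u h : 'I_k -> R) :
  (forall j, 0 <= w j) -> (forall j, w j <= 1) -> \sum_j w j = 1 ->
  2 * (\sum_j w j * u j * h j - (\sum_j w j * u j) * (\sum_j w j * h j))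
   <= \sum_j u j ^+ 2 + \sum_j h j ^+ 2.
Proof.
move=> w_ge0 w_le1 w_sum1; set U := \sum_j w j * u j.
have covE : \sum_j w j * u j * h j - U * (\sum_j w j * h j)
    = \sum_j w j * (u j - U) * h j.
  by rewrite mulr_sumr -sumrB; apply: eq_bigr => j _; ring.
have varE : \sum_j w j * (u j - U) ^+ 2 = \sum_j w j * u j ^+ 2 - U ^+ 2.
  transitivity (\sum_j w j * u j ^+ 2 - 2 * U * U + U ^+ 2 * \sum_j w j).
    rewrite -[in RHS]/U [2 * U * _]mulr_sumr [U ^+ 2 * _]mulr_sumr -sumrB -big_split /=.
    by apply: eq_bigr => j _; ring.
  by rewrite w_sum1; ring.
have wsqr_le (a : 'I_k -> R) : \sum_j w j * a j ^+ 2 <= \sum_j a j ^+ 2.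
  by apply: ler_sum => j _; rewrite ler_piMl ?sqr_ge0.
rewrite covE; apply: le_trans (_ : _ <= \sum_j w j * (u j - U) ^+ 2 + \sum_j w j * h j ^+ 2) _.
  rewrite mulr_sumr -big_split /=; apply: ler_sum => j _.
  have := w_ge0 j; have := sqr_ge0 (u j - U - h j); nra.
rewrite varE; apply: lerD (wsqr_le h).
by rewrite lerBlDr (le_trans (wsqr_le u)) // lerDl sqr_ge0.
Qed.

Lemma softmax_sub_sqr_le k (x y : 'I_k -> R) :
  \sum_j (softmax x j - softmax y j) ^+ 2 <= \sum_j (x j - y j) ^+ 2.
Proof.
case: k x y => [|k] x y; first by rewrite !big_ord0.
set u := fun j => softmax x j - softmax y j; set h := fun j => x j - y j.
(* [phi 1 - phi 0] is the sum of the [u l ^+ 2], and [phi'] is a covariance. *)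
pose phi s := \sum_l u l * softmax (fun l => y l + s * h l) l.
have dphi t := is_derive_softmax_line y h u t.
have phi_cont : {within `[0, 1], continuous phi}.
  apply: continuous_subspaceT => t.
  by apply/differentiable_continuous/derivable1_diffP; case: (dphi t).
have [c _ phi_mvt] := MVT ltr01 (fun t _ => dphi t) phi_cont.
have line1 : (fun l => y l + 1 * h l) = x.
  by apply: funext => l; rewrite mul1r /h addrC subrK.
have line0 : (fun l => y l + 0 * h l) = y.
  by apply: funext => l; rewrite mul0r addr0.
have sum_u2 : \sum_l u l ^+ 2 = phi 1 - phi 0.
  by rewrite /phi line1 line0 -sumrB; apply: eq_bigr => l _; rewrite -mulrBr.
rewrite -[LHS]/(phi 1 - phi 0) -sum_u2 subr0 mulr1 in phi_mvt.
pose v l := y l + c * h l.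
have := covariance_le u h (softmax_ge0 v) (softmax_le1 v) (sum_softmax v).
rewrite -phi_mvt; lra.
Qed.

Lemma sigmoid_softmax (a : R) :
  sigmoid a = softmax (fun i : 'I_2 => if i == ord0 then a else 0) ord0 /\
  1 - sigmoid a = softmax (fun i : 'I_2 => if i == ord0 then a else 0) (lift ord0 ord0).
Proof.
rewrite /softmax !big_ord_recr big_ord0 /= add0r expR0 /sigmoid expRN.
have ea : expR a != 0 by rewrite gt_eqF ?expR_gt0.
have ea1 : expR a + 1 != 0 by rewrite gt_eqF // ltr_pwDl ?expR_gt0.
split; field; rewrite ?ea ?ea1 //.
Qed.

Lemma sigmoid_sub_sqr_le (a b : R) : (sigmoid a - sigmoid b) ^+ 2 <= (a - b) ^+ 2.
Proof.
have [sa sa'] := sigmoid_softmax a; have [sb sb'] := sigmoid_softmax b.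
have := softmax_sub_sqr_le (fun i : 'I_2 => if i == ord0 then a else 0)
                           (fun i : 'I_2 => if i == ord0 then b else 0).
rewrite !big_ord_recl !big_ord0 /= -sa -sb -sa' -sb' subrr expr0n /= !addr0.
have -> : 1 - sigmoid a - (1 - sigmoid b) = - (sigmoid a - sigmoid b) by ring.
rewrite sqrrN.
have := sqr_ge0 (sigmoid a - sigmoid b); lra.
Qed.

End softmax.

Section frobenius.
Variable R : realType.

Lemma weighted_cauchy_schwarz k (c a b : 'I_k -> R) : (forall j, 0 <= c j) ->
  (\sum_j c j * a j * b j) ^+ 2 <= (\sum_j c j * a j ^+ 2) * (\sum_j c j * b j ^+ 2).
Proof.
move=> c_ge0.
set A := \sum_j c j * a j ^+ 2; set B := \sum_j c j * b j ^+ 2; set S := \sum_j c j * a j * b j.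
have lin p q s : \sum_j c j * (p * a j ^+ 2 + q * b j ^+ 2 + s * (a j * b j))
    = p * A + q * B + s * S.
  by rewrite /A /B /S !mulr_sumr -!big_split; apply: eq_bigr => j _ /=; ring.
have lagrange : \sum_i c i * \sum_j c j * (a i * b j - a j * b i) ^+ 2
    = 2 * (A * B - S ^+ 2).
  transitivity (\sum_i c i * (B * a i ^+ 2 + A * b i ^+ 2 + (- 2 * S) * (a i * b i))).
    apply: eq_bigr => i _; congr (_ * _).
    have -> : B * a i ^+ 2 + A * b i ^+ 2 + (- 2 * S) * (a i * b i)
        = b i ^+ 2 * A + a i ^+ 2 * B + (- 2 * (a i * b i)) * S by ring.
    by rewrite -lin; apply: eq_bigr => j _; ring.
  by rewrite lin; ring.
have : 0 <= \sum_i c i * \sum_j c j * (a i * b j - a j * b i) ^+ 2.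
  by apply: sumr_ge0 => i _; rewrite mulr_ge0 // sumr_ge0 // => j _; rewrite mulr_ge0 ?sqr_ge0.
by rewrite lagrange pmulr_rge0 // subr_ge0.
Qed.

Lemma cauchy_schwarz k (a b : 'I_k -> R) :
  (\sum_j a j * b j) ^+ 2 <= (\sum_j a j ^+ 2) * (\sum_j b j ^+ 2).
Proof.
have := @weighted_cauchy_schwarz k (fun=> 1) a b (fun=> ler01).
by under eq_bigr do rewrite mul1r; under [X in _ <= X * _]eq_bigr do rewrite mul1r;
   under [X in _ <= _ * X]eq_bigr do rewrite mul1r.
Qed.

Lemma frob2_ge0 m k (M : 'M[R]_(m, k)) : 0 <= frob2 M.
Proof. by apply: sumr_ge0 => i _; apply: sumr_ge0 => j _; exact: sqr_ge0. Qed.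

Lemma sqr_mx_norm_le_frob2 m k (M : 'M[R]_(m, k)) : `|M| ^+ 2 <= frob2 M.
Proof.
have [M0|/mx_norm_neq0[[i j] /= Mij]] := eqVneq (mx_norm M) 0.
  by rewrite [`|M|]M0 expr0n frob2_ge0.
rewrite [`|M|]Mij real_normK ?num_real // /frob2 (bigD1 i) //= (bigD1 j) //= -addrA lerDl.
apply: addr_ge0; first by apply: sumr_ge0 => l _; exact: sqr_ge0.
by apply: sumr_ge0 => l _; apply: sumr_ge0 => l' _; exact: sqr_ge0.
Qed.

Lemma frob2_le_sqr_mx_norm m k (M : 'M[R]_(m, k)) : frob2 M <= (m * k)%:R * `|M| ^+ 2.
Proof.
have entry_le i j : M i j ^+ 2 <= `|M| ^+ 2.
  rewrite -real_normK ?num_real // lerXn2r ?nnegrE //.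
  rewrite [`|M|]mx_normrE; exact: (le_bigmax _ (fun ij : 'I_m * 'I_k => `|M ij.1 ij.2|) (i, j)).
apply: le_trans (_ : \sum_(i < m) \sum_(j < k) `|M| ^+ 2 <= _).
  by apply: ler_sum => i _; apply: ler_sum => j _; exact: entry_le.
by rewrite !sumr_const !card_ord -mulrnA mulr_natl mulnC.
Qed.

Lemma frob2_mulmx_le m k l (M : 'M[R]_(m, k)) (W : 'M[R]_(k, l)) :
  frob2 (M *m W) <= frob2 M * frob2 W.
Proof.
rewrite /frob2 [X in _ <= _ * X]exchange_big /= mulr_suml.
apply: ler_sum => i _; rewrite mulr_sumr; apply: ler_sum => j _.
rewrite mxE; exact: cauchy_schwarz.
Qed.

Lemma norm_adjE n (A : 'M[R]_n) i j : norm_adj A i j =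
  (Num.sqrt (deg_AI A i))^-1 * (A + 1%:M) i j * (Num.sqrt (deg_AI A j))^-1.
Proof.
rewrite /norm_adj /= mxE (bigD1 j) //= big1 ?addr0; last first.
  by move=> l /negbTE lj; rewrite mxE lj mulr0.
rewrite mxE eqxx mxE (bigD1 i) //= big1 ?addr0; last first.
  by move=> l /negbTE li; rewrite mxE eq_sym li mul0r.
by rewrite mxE eqxx.
Qed.

Section normalized_adjacency.
Variables (n : nat) (A : 'M[R]_n).
Hypothesis adjA : is_adjacency A.

Let C := A + 1%:M.
Let dg := deg_AI A.

Let C_ge0 i j : 0 <= C i j.
Proof.
have [_ [A01 _]] := adjA.
by rewrite !mxE addr_ge0 ?ler0n //; case: (A01 i j) => ->.
Qed.

Let C_sym i j : C i j = C j i.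
Proof. by have [Asym _] := adjA; rewrite !mxE Asym eq_sym. Qed.

Let dg_gt0 i : 0 < dg i.
Proof.
have [_ [_ Adiag]] := adjA.
rewrite /dg /deg_AI (bigD1 i) //= ltr_pwDl //; last by rewrite sumr_ge0.
by rewrite !mxE Adiag eqxx add0r ltr01.
Qed.

Lemma sum_norm_adj_mul_sqr_le (v : 'I_n -> R) :
  \sum_i (\sum_l norm_adj A i l * v l) ^+ 2 <= \sum_l v l ^+ 2.
Proof.
pose s i := Num.sqrt (dg i).
have s_sqr i : s i ^+ 2 = dg i by rewrite sqr_sqrtr // ltW.
have row_le i : (\sum_l norm_adj A i l * v l) ^+ 2 <= \sum_l C i l * (v l ^+ 2 / dg l).
  have -> : \sum_l norm_adj A i l * v l = (s i)^-1 * \sum_l C i l * 1 * (v l / s l).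
    by rewrite mulr_sumr; apply: eq_bigr => l _; rewrite norm_adjE; ring.
  rewrite exprMn exprVn s_sqr.
  apply: le_trans (ler_wpM2l _ (weighted_cauchy_schwarz _ _ (C_ge0 i))) _.
    by rewrite invr_ge0 ltW.
  under eq_bigr do rewrite expr1n mulr1.
  rewrite mulrA mulVf ?mul1r ?gt_eqF //.
  by apply: ler_sum => l _; rewrite expr_div_n s_sqr.
apply: le_trans (ler_sum _ (fun i _ => row_le i)) _.
rewrite exchange_big /=; apply: ler_sum => l _.
rewrite -mulr_suml (eq_bigr _ (fun i _ => C_sym i l)).
by rewrite mulrCA mulfV ?mulr1 ?gt_eqF //; exact: dg_gt0.
Qed.

Lemma frob2_norm_adj_mul_le k (M : 'M[R]_(n, k)) : frob2 (norm_adj A *m M) <= frob2 M.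
Proof.
rewrite /frob2 exchange_big /= [X in _ <= X]exchange_big /=.
apply: ler_sum => j _; under eq_bigr do rewrite mxE.
exact: (sum_norm_adj_mul_sqr_le (fun l => M l j)).
Qed.

End normalized_adjacency.

Lemma frob2_apply_act_sub_le a m k (M1 M2 : 'M[R]_(m, k)) :
  frob2 (apply_act a M1 - apply_act a M2) <= frob2 (M1 - M2).
Proof.
rewrite /frob2; apply: ler_sum => i _; case: a => /=.
  under eq_bigr do rewrite !mxE; under [X in _ <= X]eq_bigr do rewrite !mxE.
  exact: (softmax_sub_sqr_le (fun j => M1 i j) (fun j => M2 i j)).
by apply: ler_sum => j _; rewrite !mxE; exact: sigmoid_sub_sqr_le.
Qed.

Lemma frob2_one_hop_sub_le n d (A : 'M[R]_n) (W : 'M[R]_d) (B : 'M[R]_(n, d)) a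
    (Z1 Z2 : 'M[R]_(n, d)) : is_adjacency A ->
  frob2 (apply_act a (norm_adj A *m Z1 *m W + B) - apply_act a (norm_adj A *m Z2 *m W + B))
    <= frob2 W * frob2 (Z1 - Z2).
Proof.
move=> adjA; apply: le_trans (frob2_apply_act_sub_le _ _ _) _.
rewrite opprD addrACA subrr addr0 -mulmxBl -mulmxBr.
apply: le_trans (frob2_mulmx_le _ _) _.
by rewrite mulrC ler_wpM2l ?frob2_ge0 ?frob2_norm_adj_mul_le.
Qed.

Section frob2_lipschitz.
Variables (m k : nat) (F : 'M[R]_(m, k) -> 'M[R]_(m, k)) (c : R).
Hypothesis c_ge0 : 0 <= c.
Hypothesis F_lipschitz : forall x y, frob2 (F x - F y) <= c * frob2 (x - y).

Lemma frob2_iter_sub_le t x y : frob2 (iter t F x - iter t F y) <= c ^+ t * frob2 (x - y).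
Proof.
elim: t => [|t IH]; first by rewrite expr0 mul1r.
rewrite !iterS exprS -mulrA; apply: le_trans (F_lipschitz _ _) _.
exact: ler_wpM2l.
Qed.

Lemma mx_norm_iter_sub_le t x y :
  `|iter t F x - iter t F y| <= Num.sqrt (m * k)%:R * Num.sqrt c ^+ t * `|x - y|.
Proof.
rewrite -ler_sqr ?nnegrE ?mulr_ge0 ?exprn_ge0 ?sqrtr_ge0 //.
rewrite !exprMn sqr_sqrtr ?ler0n // exprAC sqr_sqrtr //.
apply: le_trans (sqr_mx_norm_le_frob2 _) _; apply: le_trans (frob2_iter_sub_le t x y) _.
by rewrite [_ * c ^+ t]mulrC -mulrA ler_wpM2l ?exprn_ge0 ?frob2_le_sqr_mx_norm.
Qed.

End frob2_lipschitz.
End frobenius.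

Theorem theorem1 (R : realType) (n d p q : nat)
  (hn : (0 < n)%N) (hd : (0 < d)%N) (hp : (0 < p)%N) (hq : (0 < q)%N)
  (A : 'M[R]_n) (hA : is_adjacency A)
  (P : 'M[R]_n) (X : 'M[R]_(n, p)) (Wx : 'M[R]_(p, d)) (Wz : 'M[R]_d)
  (hWz : frob2 Wz < 1 / n%:R) (sigma : activation) :
  well_posed (fun Z : 'M[R]_(n, d) =>
    apply_act sigma (norm_adj A *m Z *m Wz + P *m X *m Wx)).
Proof.
have Wz_lt1 : frob2 Wz < 1.
  by apply: lt_le_trans hWz _; rewrite ler_pdivrMr ?ltr0n // mul1r ler1n.
apply: (@eventually_contractive_well_posed _ _ _ (Num.sqrt (n * d)%:R) (Num.sqrt (frob2 Wz))).
- exact: sqrtr_ge0.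
- by rewrite -sqrtr1 ltr_sqrt.
- apply: mx_norm_iter_sub_le; first exact: frob2_ge0.
  by move=> Z1 Z2; exact: frob2_one_hop_sub_le.
Qed.
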